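(* Let $\mathcal{H}$ be a real Hilbert space, let $A\colon\mathcal{H}\rightrightarrows\mathcal{H}$ be maximally monotone and let $B\colon \mathcal{H}\to\mathcal{H}$ be locally Lipschitz. Let $\delta\in(0,1)$, $\sigma\in(0,1)$, $\rho\in\{1,\sigma^{-1}\}$, $\lambda_{k-1}>0$ and $x_k,x_{k-1}\in\mathcal{H}$. For $\lambda>0$ put $x_{k+1}(\lambda):=J_{\lambda A}\bigl(x_k - \lambda B(x_k) - \lambda_{k-1}(B(x_k)-B(x_{k-1}))\bigr)$. Then there exists a nonnegative integer $i$ such that, with $\lambda=\rho\lambda_{k-1}\sigma^i$, $$\lambda\|B(x_{k+1}(\lambda))-B(x_k)\|\leq\frac{\delta}{2}\|x_{k+1}(\lambda)-x_k\|.$$ In particular, the linesearch procedure (choosing the smallest such $i$ at each iteration, starting from $\lambda_{-1}>0$ and $x_0,x_{-1}\in\mathcal{H}$) always terminates, so the stepsize sequence $(\lambda_k)$ is well defined.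
   Context: $J_{\lambda A}:=(I+\lambda A)^{-1}$ denotes the resolvent. *)

From HB Require Import structures.
From mathcomp Require Import all_boot all_order all_algebra.
From mathcomp Require Import all_classical all_reals all_analysis.
Set Implicit Arguments. Unset Strict Implicit. Unset Printing Implicit Defensive.
Import Order.TTheory GRing.Theory Num.Theory.
Import numFieldNormedType.Exports.
Local Open Scope classical_set_scope.
Local Open Scope ring_scope.

Definition is_inner_product (R : realType) (V : normedModType R)
  (ip : V -> V -> R) : Prop :=
  [/\ (forall x y, ip x y = ip y x),
      (forall a x y z, ip (a *: x + y) z = a * ip x z + ip y z)
    & (forall x, ip x x = `|x| ^+ 2)].

(* Set-valued operators A : V ==> V are encoded by A x = the set A(x). *)
Definition monotone_op (R : realType) (V : normedModType R)
  (ip : V -> V -> R) (A : V -> set V) : Prop :=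
  forall x y u v, A x u -> A y v -> 0 <= ip (x - y) (u - v).

Definition maximally_monotone (R : realType) (V : normedModType R)
  (ip : V -> V -> R) (A : V -> set V) : Prop :=
  monotone_op ip A /\
  forall A' : V -> set V, monotone_op ip A' ->
    (forall x u, A x u -> A' x u) -> forall x u, A' x u -> A x u.

Definition locally_lipschitz (R : realType) (V W : normedModType R)
  (B : V -> W) : Prop :=
  forall x, exists2 r : R, 0 < r & exists L : R,
    forall y z, `|x - y| < r -> `|x - z| < r -> `|B y - B z| <= L * `|y - z|.

(* Resolvent J_{lam A} = (I + lam A)^{-1}: J x is the point y with
   x \in y + lam A y, i.e. lam^-1 (x - y) \in A y (unique when A is monotone
   and lam > 0, and existing for every x when A is maximally monotone, by Minty). *)
Definition resolvent (R : realType) (V : normedModType R)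
  (A : V -> set V) (lam : R) (x : V) : V :=
  xget 0 [set y | A y (lam^-1 *: (x - y))].

Definition next_iter (R : realType) (V : normedModType R)
  (A : V -> set V) (B : V -> V) (lamprev : R) (xk xkm1 : V) (lam : R) : V :=
  resolvent A lam (xk - lam *: B xk - lamprev *: (B xk - B xkm1)).

(* For stepsizes mu < lam the points y(lam) = J_{lam A}(w - lam b) satisfy
   |y(mu) - w|^2 + |y(lam) - y(mu)|^2 <= |y(lam) - w|^2, by monotonicity of A + b.
   Hence along a decreasing sequence of stepsizes |y - w|^2 decreases and y is
   Cauchy, with some limit p.  If p <> x_k, then lam |B y - B x_k| -> 0 while
   |y - x_k| -> |p - x_k| > 0; if p = x_k, the Lipschitz constant L of B near x_k
   gives lam |B y - B x_k| <= lam L |y - x_k|.  Either way the linesearch test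
   holds for all small lam = rho lam_{k-1} sigma^i. *)

From HB Require Import structures.
From mathcomp Require Import all_boot all_order all_algebra.
From mathcomp Require Import all_classical all_reals all_analysis.
From mathcomp Require Import lra.
Set Implicit Arguments. Unset Strict Implicit. Unset Printing Implicit Defensive.
Import Order.TTheory GRing.Theory Num.Theory.
Import numFieldNormedType.Exports.
Local Open Scope classical_set_scope.
Local Open Scope ring_scope.

Section InnerProduct.
Variables (R : realType) (V : normedModType R) (ip : V -> V -> R).
Hypothesis ip_inner : is_inner_product ip.

Let ipC x y : ip x y = ip y x. Proof. by case: ip_inner. Qed.

Let ip_norm x : ip x x = `|x| ^+ 2. Proof. by case: ip_inner. Qed.

Let ipDl x y z : ip (x + y) z = ip x z + ip y z.
Proof. by case: ip_inner => _ ipDZ _; rewrite -[x]scale1r ipDZ mul1r scale1r. Qed.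

Let ipZl a x z : ip (a *: x) z = a * ip x z.
Proof.
case: ip_inner => _ ipDZ _.
have ip0 : ip 0 z = 0.
  by apply: (@addrI _ (ip 0 z)); rewrite -ipDl !addr0.
by rewrite -[a *: x]addr0 ipDZ ip0 addr0.
Qed.

Let ipBl x y z : ip (x - y) z = ip x z - ip y z.
Proof. by rewrite ipDl -scaleN1r ipZl mulN1r. Qed.

Let ipBr x y z : ip z (x - y) = ip z x - ip z y.
Proof. by rewrite ipC ipBl !(ipC z). Qed.

Let ipZr a x z : ip z (a *: x) = a * ip z x.
Proof. by rewrite ipC ipZl ipC. Qed.

Lemma sqr_norm_sub_le (u v : V) (r s : R) :
  0 <= r < s -> 0 <= ip (u - v) (s *: v - r *: u) ->
  `|v| ^+ 2 + `|u - v| ^+ 2 <= `|u| ^+ 2.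
Proof.
case/andP=> r_ge0 lt_rs.
have := sqr_ge0 `|u - v|.
rewrite -!ip_norm !(ipBl, ipBr, ipZr) (ipC v u).
nra.
Qed.

End InnerProduct.

Lemma sqr_norm_gap_cauchy (R : realType) (V : normedModType R) (d : V ^nat) :
  (forall i j, (i <= j)%N -> `|d j| ^+ 2 + `|d i - d j| ^+ 2 <= `|d i| ^+ 2) ->
  cauchy (d @ \oo).
Proof.
move=> gap; pose a n := `|d n| ^+ 2.
have a_noninc : {homo a : m n / (m <= n)%N >-> n <= m}.
  by move=> m n /gap; apply: le_trans; rewrite lerDl sqr_ge0.
have gap_le i j : `|d i - d j| ^+ 2 <= `|a i - a j|.
  wlog le_ij : i j / (i <= j)%N.
    move=> gap_wlog; have [/gap_wlog//|/ltnW/gap_wlog] := leqP i j.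
    by rewrite distrC [`|a j - _|]distrC.
  by rewrite ger0_norm ?subr_ge0 ?a_noninc // lerBrDl gap.
have /cauchy_ballP a_cauchy : cauchy (a @ \oo).
  apply/cvg_cauchy/nonincreasing_is_cvgn => //.
  by exists 0 => _ [n _ <-]; rewrite sqr_ge0.
apply/cauchy_ballP => e e_gt0.
have := a_cauchy _ (exprn_gt0 2 e_gt0); rewrite !near_map2.
apply: filterS => -[i j]; rewrite -!ball_normE /= => lt_a.
rewrite -(ltr_pXn2r (_ : 0 < 2)%N) ?nnegrE ?(ltW e_gt0) //.
exact: le_lt_trans (gap_le i j) lt_a.
Qed.

Section MonotoneOperator.
Variables (R : realType) (V : normedModType R) (ip : V -> V -> R) (A : V -> set V).
Hypotheses (ip_inner : is_inner_product ip) (A_mono : monotone_op ip A).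

Lemma monotone_op_shift (b : V) : monotone_op ip (fun x u => A x (u - b)).
Proof. by move=> x y u v /A_mono Au /Au; rewrite opprB addrA subrK. Qed.

Lemma resolvent_sqr_norm_le (w y z : V) (lam mu : R) :
  0 < mu < lam -> A y (lam^-1 *: (w - y)) -> A z (mu^-1 *: (w - z)) ->
  `|z - w| ^+ 2 + `|y - z| ^+ 2 <= `|y - w| ^+ 2.
Proof.
case/andP=> mu_gt0 lt_mu_lam Ay Az.
have := A_mono Ay Az.
have -> : y - z = (y - w) - (z - w) by rewrite opprB addrA subrK.
have -> : lam^-1 *: (w - y) - mu^-1 *: (w - z) =
          mu^-1 *: (z - w) - lam^-1 *: (y - w).
  by rewrite -[w - y]opprB -[w - z]opprB !scalerN opprK addrC.
apply: sqr_norm_sub_le => //.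
by rewrite invr_ge0 ltW ?ltf_pV2 ?posrE //=; apply: lt_trans lt_mu_lam.
Qed.

End MonotoneOperator.

Lemma resolvent_path_cvg (R : realType) (V : completeNormedModType R)
    (ip : V -> V -> R) (A : V -> set V) (w : V) (lam : R ^nat) (y : V ^nat) :
  is_inner_product ip -> monotone_op ip A ->
  (forall i, 0 < lam i) -> (forall i j, (i < j)%N -> lam j < lam i) ->
  (\forall i \near \oo, A (y i) ((lam i)^-1 *: (w - y i))) ->
  cvgn y.
Proof.
move=> ip_inner A_mono lam_gt0 lam_decr [N _ yN].
pose d n := y (n + N)%N - w.
have d_cauchy : cauchy (d @ \oo).
  apply: sqr_norm_gap_cauchy => i j; rewrite leq_eqVlt => /predU1P[<-|lt_ij].
    by rewrite subrr normr0 expr0n addr0.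
  rewrite /d opprB addrA subrK.
  apply: (resolvent_sqr_norm_le ip_inner A_mono _
           (yN _ (leq_addl i N)) (yN _ (leq_addl j N))).
  by rewrite lam_gt0 lam_decr // ltn_add2r.
have /cvg_ex[p d_p] : cvgn d by exact: cauchy_cvg.
apply/cvg_ex; exists (p + w); rewrite -(cvg_shiftn N).
have -> : (fun n => y (n + N)%N) = d + cst w by apply/funext => n /=; rewrite subrK.
exact: cvgD d_p (cvg_cst w).
Qed.

Lemma locally_lipschitz_step_near (R : realType) (V W : normedModType R)
    (B : V -> W) (I : Type) (F : set_system I) {FF : Filter F}
    (y : I -> V) (lam : I -> R) (p x : V) (eps : R) :
  locally_lipschitz B -> 0 < eps -> y @ F --> p -> lam @ F --> 0 ->
  (forall i, 0 <= lam i) ->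
  \forall i \near F, lam i * `|B (y i) - B x| <= eps * `|y i - x|.
Proof.
move=> B_lip eps_gt0 /cvgrPdist_lt y_p lam_0 lam_ge0.
have [r r_gt0 [L B_L]] := B_lip p.
have B_near_p i : `|p - y i| < r -> `|B (y i) - B p| <= `|L| * `|y i - p|.
  move=> y_p_r; apply: le_trans (B_L _ p y_p_r _) _; first by rewrite subrr normr0.
  by rewrite ler_wpM2r ?ler_norm.
have lamM_small (c e : R) : 0 < e -> \forall i \near F, lam i * c < e.
  by move=> e_gt0; apply: cvgr_lt e_gt0; rewrite -(mul0r c); exact: cvgM lam_0 (cvg_cst c).
have [<-|p_neq_x] := eqVneq p x.
  near=> i; apply: le_trans (_ : lam i * (`|L| * `|y i - p|) <= _).
    by rewrite ler_wpM2l // B_near_p //; near: i; exact: y_p.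
  rewrite mulrA ler_wpM2r // ltW //; near: i; exact: lamM_small.
set e := `|p - x|; have e_gt0 : 0 < e by rewrite normr_gt0 subr_eq0.
set M := `|L| * r + `|B p - B x|.
near=> i.
have y_p_r : `|p - y i| < r by near: i; exact: y_p.
have y_p_e : `|p - y i| < e / 2 by near: i; apply: y_p; rewrite divr_gt0.
have B_M : `|B (y i) - B x| <= M.
  rewrite -[B (y i) - _](subrKA (B p)) (le_trans (ler_normD _ _)) // lerD2r.
  rewrite (le_trans (B_near_p _ y_p_r)) // ler_wpM2l // distrC ltW //.
have y_x : e / 2 <= `|y i - x|.
  have := ler_distD (y i) p x; rewrite -/e; lra.
apply: le_trans (_ : lam i * M <= _); first by rewrite ler_wpM2l.
apply: le_trans (_ : eps * (e / 2) <= _); last by rewrite ler_wpM2l // ltW.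
by apply: ltW; near: i; apply: lamM_small; rewrite mulr_gt0 ?divr_gt0.
Unshelve. all: by end_near.
Qed.

Section Resolvent.
Variables (R : realType) (V : normedModType R) (A : V -> set V) (lam : R) (x : V).

Lemma resolventP : (exists y, A y (lam^-1 *: (x - y))) ->
  A (resolvent A lam x) (lam^-1 *: (x - resolvent A lam x)).
Proof. exact: xgetPex. Qed.

Lemma resolvent_undef : ~ (exists y, A y (lam^-1 *: (x - y))) ->
  resolvent A lam x = 0.
Proof. by move=> undef; apply: xgetPN => y Ay; apply: undef; exists y. Qed.

End Resolvent.

Lemma backtracking_terminates (R : realType) (H : completeNormedModType R)
    (ip : H -> H -> R) (A : H -> set H) (B : H -> H) (lam : R ^nat)
    (w b x : H) (eps : R) :
  is_inner_product ip -> monotone_op ip A -> locally_lipschitz B -> 0 < eps ->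
  (forall i, 0 < lam i) -> (forall i j, (i < j)%N -> lam j < lam i) ->
  lam @ \oo --> 0 ->
  exists i, let y := resolvent A (lam i) (w - lam i *: b) in
    lam i * `|B y - B x| <= eps * `|y - x|.
Proof.
move=> ip_inner A_mono B_lip eps_gt0 lam_gt0 lam_decr lam_0.
have step_near (z : H ^nat) (p : H) : z @ \oo --> p ->
    \forall i \near \oo, lam i * `|B (z i) - B x| <= eps * `|z i - x|.
  move=> z_p.
  exact: locally_lipschitz_step_near B_lip eps_gt0 z_p lam_0 (fun i => ltW (lam_gt0 i)).
pose y i := resolvent A (lam i) (w - lam i *: b).
pose defined i := exists z, A z ((lam i)^-1 *: (w - lam i *: b - z)).
have [def_near|undef_often] := pselect (\forall i \near \oo, defined i).
  have y_res : \forall i \near \oo, A (y i) ((lam i)^-1 *: (w - y i) - b).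
    apply: filterS def_near => i /resolventP.
    by rewrite addrAC scalerBr scalerA mulVf ?gt_eqF ?scale1r.
  have /cvg_ex[p y_p] : cvgn y.
    exact: resolvent_path_cvg ip_inner (monotone_op_shift (b := b) A_mono) lam_gt0 lam_decr y_res.
  exact: filter_ex (step_near _ _ y_p).
(* Without Minty's theorem the resolvent may be undefined; [xget] then returns 0,
   and the constant sequence 0 eventually passes the test. *)
have [i [step_i undef_i]] :
    exists i, lam i * `|B 0 - B x| <= eps * `|0 - x| /\ ~ defined i.
  apply: contrapT => none; apply: undef_often.
  apply: filterS (step_near (fun=> 0) 0 (cvg_cst 0)) => i step_i.
  by apply: contrapT => undef_i; apply: none; exists i.
by exists i; rewrite /= resolvent_undef.
Qed.

Theorem lemma3p2 (R : realType) (H : completeNormedModType R)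
  (ip : H -> H -> R) (A : H -> set H) (B : H -> H)
  (delta sigma rho lamprev : R) (xk xkm1 : H) :
  is_inner_product ip ->
  maximally_monotone ip A ->
  locally_lipschitz B ->
  0 < delta < 1 -> 0 < sigma < 1 ->
  (rho = 1 \/ rho = sigma^-1) ->
  0 < lamprev ->
  exists i : nat,
    let lam := rho * lamprev * sigma ^+ i in
    lam * `|B (next_iter A B lamprev xk xkm1 lam) - B xk|
      <= delta / 2 * `|next_iter A B lamprev xk xkm1 lam - xk|.
Proof.
move=> ip_inner [A_mono _] B_lip /andP[delta_gt0 _] /andP[sigma_gt0 sigma_lt1]
  rho_cases lamprev_gt0.
have c_gt0 : 0 < rho * lamprev.
  by rewrite mulr_gt0 //; case: rho_cases => ->; rewrite ?invr_gt0.
pose lam i := rho * lamprev * sigma ^+ i.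
have lam_gt0 i : 0 < lam i by rewrite mulr_gt0 // exprn_gt0.
have lam_decr i j : (i < j)%N -> lam j < lam i.
  by move=> lt_ij; rewrite ltr_pM2l // ltr_iXn2l // sigma_gt0.
have lam_0 : lam @ \oo --> 0.
  rewrite -(mulr0 (rho * lamprev)); apply: cvgM (cvg_cst _) (cvg_expr _).
  by rewrite gtr0_norm.
have delta2_gt0 : 0 < delta / 2 by rewrite divr_gt0.
have [i step_i] := backtracking_terminates (xk - lamprev *: (B xk - B xkm1)) (B xk) xk
  ip_inner A_mono B_lip delta2_gt0 lam_gt0 lam_decr lam_0.
by exists i; rewrite /next_iter addrAC.
Qed.
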